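(* Let $L$ be a Stonean locale and $\nu:L\to\mathbb{R}$ a real normal valuation. Let $\nu_+$ (resp. $\nu_-$) be the supremum of all $a\in L$ such that $\nu$ (resp. $-\nu$) restricted to $\{b\in L:b\le a\}$ takes only nonnegative values. Then: an element $a\in L$ satisfies this condition for $\nu$ (resp. $-\nu$) if and only if $a\le\nu_+$ (resp. $a\le\nu_-$); $\nu_+\vee\nu_-=1$; $\nu_+\wedge\nu_-$ is the largest $a\in L$ such that $\nu$ vanishes on $\{b:b\le a\}$; and the maps $\nu^+(x)=\nu(\nu_+\wedge x)$ and $\nu^-(x)=-\nu(\nu_-\wedge x)$ are positive normal valuations on $L$ with $\nu=\nu^+-\nu^-$. The same statements hold when $\nu:L\to\mathbb{R}$ is a real continuous valuation on a Boolean locale $L$ (a complete Boolean algebra).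
   Context: Frames/locales: a frame is a poset with finite meets and arbitrary joins with binary meets distributing over joins; $\neg x=\sup\{w:w\wedge x=0\}$. Compact open: $a$ with $\bigvee S\ge a\Rightarrow\bigvee F\ge a$ for some finite $F\subset S$. A Stonean locale is coherent (compact opens closed under finite meets including $1$, every element a join of compact opens), regular ($y=\bigvee\{x:\neg x\vee y=1\}$), and extremally disconnected ($\neg x\vee\neg\neg x=1$). A real valuation is $\nu:L\to\mathbb{R}$ with $\nu(0)=0$ and $\nu(x)+\nu(y)=\nu(x\vee y)+\nu(x\wedge y)$; it is continuous if $\nu(\sup I)=\lim_{x\in I}\nu(x)$ for every directed $I$; normal if in addition $\nu(\neg\neg a)=\nu(a)$. A positive valuation takes values in $[0,\infty)$ (and is monotone). *)

From Stdlib Require Import Reals List.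
Open Scope R_scope.

Record frame := Frame {
  car :> Type;
  le : car -> car -> Prop;
  le_refl : forall x, le x x;
  le_trans : forall x y z, le x y -> le y z -> le x z;
  le_antisym : forall x y, le x y -> le y x -> x = y;
  meet : car -> car -> car;
  top : car;
  sup : (car -> Prop) -> car;
  meet_glb : forall x y z, le z (meet x y) <-> (le z x /\ le z y);
  top_max : forall x, le x top;
  sup_lub : forall (S : car -> Prop) z, le (sup S) z <-> (forall s, S s -> le s z);
  meet_sup_distr : forall x (S : car -> Prop),
      meet x (sup S) = sup (fun y => exists s, S s /\ y = meet x s)
}.

Arguments le {f}.
Arguments meet {f}.
Arguments top {f}.
Arguments sup {f}.

Section FrameDefs.
Variable L : frame.

Definition bot : L := sup (fun _ : L => False).
Definition join (x y : L) : L := sup (fun z => z = x \/ z = y).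

Definition neg (x : L) : L := sup (fun w => meet w x = bot).

Definition compact (a : L) : Prop :=
  forall S : L -> Prop, le a (sup S) ->
    exists F : list L, (forall s, In s F -> S s) /\ le a (sup (fun z => In z F)).

Definition coherent : Prop :=
  compact top /\
  (forall a b : L, compact a -> compact b -> compact (meet a b)) /\
  (forall x : L, x = sup (fun c => compact c /\ le c x)).

Definition regular : Prop :=
  forall y : L, y = sup (fun x => join (neg x) y = top).

Definition extremally_disconnected : Prop :=
  forall x : L, join (neg x) (neg (neg x)) = top.

Definition stonean : Prop := coherent /\ regular /\ extremally_disconnected.

Definition boolean_locale : Prop := forall x : L, join x (neg x) = top.

Definition valuation (nu : L -> R) : Prop :=
  nu bot = 0 /\ forall x y, nu x + nu y = nu (join x y) + nu (meet x y).

Definition directed (I : L -> Prop) : Prop :=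
  (exists x, I x) /\
  forall x y, I x -> I y -> exists z, I z /\ le x z /\ le y z.

(* nu (sup I) is the limit of the net (nu x)_{x in I}, I ordered by le *)
Definition continuous_valuation (nu : L -> R) : Prop :=
  valuation nu /\
  forall I : L -> Prop, directed I ->
    forall eps, 0 < eps -> exists x0, I x0 /\
      forall x, I x -> le x0 x -> Rabs (nu x - nu (sup I)) < eps.

Definition normal_valuation (nu : L -> R) : Prop :=
  continuous_valuation nu /\ forall a, nu (neg (neg a)) = nu a.

Definition positive_valuation (nu : L -> R) : Prop :=
  valuation nu /\ (forall x, 0 <= nu x) /\ (forall x y, le x y -> nu x <= nu y).

Definition nonneg_below (nu : L -> R) (a : L) : Prop :=
  forall b, le b a -> 0 <= nu b.

Definition nu_plus (nu : L -> R) : L := sup (nonneg_below nu).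
Definition nu_minus (nu : L -> R) : L := sup (nonneg_below (fun x => - nu x)).

End FrameDefs.

Arguments bot {L}.
Arguments join {L}.
Arguments neg {L}.
Arguments nu_plus {L}.
Arguments nu_minus {L}.
Arguments nonneg_below {L}.

From Stdlib Require Import Reals Lra Lia Wf_nat Classical IndefiniteDescription.
Open Scope R_scope.

(* By normality, [nu d = nu (d /\ a) + nu (d /\ ~a)] for all [d] and [a].
   Hence the elements below which [nu] is nonnegative are closed under binary
   and, by continuity, directed joins, so [nu_plus] is the largest of them, and
   it is regular.  A Hahn-type greedy exhaustion shows that every [c] with
   [nu c > 0] contains such an element of positive measure; thus [nu <= 0]
   below [~nu_plus], i.e. [~nu_plus <= nu_minus], and extremal disconnectedness
   gives [nu_plus \/ nu_minus >= ~nu_plus \/ ~~nu_plus = 1]. *)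

Arguments le_refl {f} x.
Arguments le_trans {f} x y z.
Arguments le_antisym {f} x y.
Arguments meet_glb {f} x y z.
Arguments top_max {f} x.
Arguments sup_lub {f} S z.
Arguments meet_sup_distr {f} x S.

(* A nearly minimal choice at every scale [1/(m+1)], which exists even when
   [f] is unbounded below. *)
Lemma exists_threshold_minimizer {T : Type} (f : T -> R) (P : T -> Prop) (t0 : T) :
  P t0 -> f t0 = 0 ->
  exists t, P t /\ f t <= 0 /\
    forall m b, P b -> f b < - / INR (S m) -> f t < - / INR (S m).
Proof.
  intros Ht0 Hft0.
  set (reached m := exists b, P b /\ f b < - / INR (S m)).
  destruct (classic (exists m, reached m)) as [Hex | Hnone].
  - destruct (dec_inh_nat_subset_has_unique_least_element reached (fun m => classic _) Hex)
      as [m0 [[[b0 [Hb0 Hfb0]] Hleast] _]].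
    exists b0; split; [exact Hb0 | split].
    + assert (0 < / INR (S m0)) by (apply Rinv_0_lt_compat, lt_0_INR; lia). lra.
    + intros m b Hb Hfb.
      assert (Hm : (m0 <= m)%nat) by (apply Hleast; exists b; auto).
      assert (/ INR (S m) <= / INR (S m0)).
      { apply Rinv_le_contravar; [apply lt_0_INR; lia | apply le_INR; lia]. }
      lra.
  - exists t0; split; [exact Ht0 | split; [lra |]].
    intros m b Hb Hfb. exfalso. apply Hnone. exists m, b. auto.
Qed.

Section FrameOrder.
Context {L : frame}.

Lemma le_sup (S : L -> Prop) (x : L) : S x -> le x (sup S).
Proof. intros Hx. exact (proj1 (sup_lub S (sup S)) (le_refl _) x Hx). Qed.

Lemma sup_le (S : L -> Prop) (z : L) : (forall s, S s -> le s z) -> le (sup S) z.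
Proof. exact (proj2 (sup_lub S z)). Qed.

Lemma meet_le_l (x y : L) : le (meet x y) x.
Proof. exact (proj1 (proj1 (meet_glb x y _) (le_refl _))). Qed.

Lemma meet_le_r (x y : L) : le (meet x y) y.
Proof. exact (proj2 (proj1 (meet_glb x y _) (le_refl _))). Qed.

Lemma le_meet (x y z : L) : le z x -> le z y -> le z (meet x y).
Proof. intros Hx Hy. exact (proj2 (meet_glb x y z) (conj Hx Hy)). Qed.

Lemma bot_le (x : L) : le bot x.
Proof. apply sup_le. intros s []. Qed.

Lemma le_bot_eq (x : L) : le x bot -> x = bot.
Proof. intros H. apply le_antisym; [exact H | apply bot_le]. Qed.

Lemma top_le_eq (x : L) : le top x -> x = top.
Proof. intros H. apply le_antisym; [apply top_max | exact H]. Qed.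

Lemma join_ge_l (x y : L) : le x (join x y).
Proof. apply le_sup. now left. Qed.

Lemma join_ge_r (x y : L) : le y (join x y).
Proof. apply le_sup. now right. Qed.

Lemma join_le (x y z : L) : le x z -> le y z -> le (join x y) z.
Proof. intros Hx Hy. apply sup_le. now intros s [-> | ->]. Qed.

End FrameOrder.

Ltac solve_meet_le :=
  first [ apply le_refl | assumption
        | apply le_meet; solve_meet_le
        | eapply le_trans; [apply meet_le_l |]; solve_meet_le
        | eapply le_trans; [apply meet_le_r |]; solve_meet_le ].

Section FrameAlgebra.
Context {L : frame}.

Lemma meet_comm (x y : L) : meet x y = meet y x.
Proof. apply le_antisym; solve_meet_le. Qed.

Lemma meet_l (x y : L) : le x y -> meet x y = x.
Proof. intros H. apply le_antisym; solve_meet_le. Qed.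

Lemma meet_top_r (x : L) : meet x top = x.
Proof. apply meet_l, top_max. Qed.

Lemma meet_mono (x y x' y' : L) : le x x' -> le y y' -> le (meet x y) (meet x' y').
Proof.
  intros Hx Hy. apply le_meet; [apply le_trans with x | apply le_trans with y];
    auto using meet_le_l, meet_le_r.
Qed.

Lemma meet_join_distr_l (x y z : L) : meet x (join y z) = join (meet x y) (meet x z).
Proof.
  unfold join. rewrite meet_sup_distr. apply le_antisym; apply sup_le.
  - intros s [t [[-> | ->] ->]]; apply le_sup; [left | right]; reflexivity.
  - intros s [-> | ->]; apply le_sup; eexists; split; [now left | | now right |]; reflexivity.
Qed.

Lemma meet_neg_l (x : L) : meet (neg x) x = bot.
Proof.
  apply le_bot_eq. rewrite meet_comm. unfold neg. rewrite meet_sup_distr.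
  apply sup_le. intros s [w [Hw ->]]. rewrite meet_comm, Hw. apply le_refl.
Qed.

Lemma meet_neg_r (x : L) : meet x (neg x) = bot.
Proof. rewrite meet_comm. apply meet_neg_l. Qed.

Lemma le_neg (x y : L) : meet y x = bot -> le y (neg x).
Proof. intros H. now apply le_sup. Qed.

Lemma neg_antimono (x y : L) : le x y -> le (neg y) (neg x).
Proof.
  intros H. apply le_neg, le_bot_eq. rewrite <- (meet_neg_l y). solve_meet_le.
Qed.

Lemma le_neg_neg (x : L) : le x (neg (neg x)).
Proof. apply le_neg, meet_neg_r. Qed.

Lemma neg_bot : neg (@bot L) = top.
Proof. apply top_le_eq, le_neg, le_bot_eq, meet_le_r. Qed.

Lemma neg_neg_meet (x y : L) : neg (neg (meet x y)) = meet (neg (neg x)) (neg (neg y)).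
Proof.
  apply le_antisym.
  - apply le_meet; do 2 apply neg_antimono; solve_meet_le.
  - apply le_neg, le_bot_eq. set (w := neg (meet x y)).
    assert (Hwx : le (meet w x) (neg y)).
    { apply le_neg, le_bot_eq. rewrite <- (meet_neg_l (meet x y)). solve_meet_le. }
    assert (Hwy : le (meet w (neg (neg y))) (neg x)).
    { apply le_neg, le_bot_eq. rewrite <- (meet_neg_r (neg y)).
      apply le_meet; [eapply le_trans; [| exact Hwx] |]; solve_meet_le. }
    rewrite <- (meet_neg_r (neg x)).
    apply le_meet; [eapply le_trans; [| exact Hwy] |]; solve_meet_le.
Qed.

Lemma neg_neg_join_neg (x : L) : neg (neg (join x (neg x))) = top.
Proof.
  enough (Hbot : neg (join x (neg x)) = bot) by (rewrite Hbot; apply neg_bot).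
  apply le_bot_eq. rewrite <- (meet_neg_r (neg x)).
  apply le_meet; apply neg_antimono; [apply join_ge_l | apply join_ge_r].
Qed.

Lemma boolean_neg_neg : boolean_locale L -> forall x : L, neg (neg x) = x.
Proof.
  intros Hbool x. apply le_antisym; [| apply le_neg_neg].
  rewrite <- (meet_top_r (neg (neg x))), <- (Hbool x), meet_join_distr_l, meet_neg_l.
  apply join_le; [apply meet_le_r | apply bot_le].
Qed.

Lemma boolean_extremally_disconnected : boolean_locale L -> extremally_disconnected L.
Proof.
  intros Hbool x. rewrite (boolean_neg_neg Hbool). apply top_le_eq.
  rewrite <- (Hbool x). apply join_le; [apply join_ge_r | apply join_ge_l].
Qed.

Lemma directed_meet_l (c : L) (I : L -> Prop) :
  directed L I -> directed L (fun y => exists s, I s /\ y = meet c s).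
Proof.
  intros [[x Hx] Hdir]. split; [exists (meet c x); eauto |].
  intros y1 y2 [s1 [Hs1 ->]] [s2 [Hs2 ->]].
  destruct (Hdir s1 s2 Hs1 Hs2) as [z [Hz [H1 H2]]].
  exists (meet c z). split; [eauto |]. split; apply meet_mono; auto using le_refl.
Qed.

Lemma chain_le (e : nat -> L) :
  (forall k, le (e k) (e (S k))) -> forall i j, (i <= j)%nat -> le (e i) (e j).
Proof.
  intros He i j Hij. induction Hij; [apply le_refl |]. eapply le_trans; eauto.
Qed.

Lemma directed_chain (e : nat -> L) :
  (forall k, le (e k) (e (S k))) -> directed L (fun y => exists k, y = e k).
Proof.
  intros He. split; [exists (e O); eauto |].
  intros x y [i ->] [j ->]. exists (e (Nat.max i j)).
  split; [eauto |]. split; apply chain_le; auto; lia.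
Qed.

End FrameAlgebra.

Lemma nonneg_below_le {L : frame} (mu : L -> R) (a b : L) :
  nonneg_below mu a -> le b a -> nonneg_below mu b.
Proof. intros Ha Hba c Hcb. apply Ha. eapply le_trans; eauto. Qed.

Section Valuation.
Context {L : frame} {mu : L -> R} (Hval : valuation L mu).

Lemma valuation_bot : mu bot = 0.
Proof. exact (proj1 Hval). Qed.

Lemma valuation_join_disjoint (x y : L) : meet x y = bot -> mu (join x y) = mu x + mu y.
Proof.
  intros Hxy. pose proof (proj2 Hval x y) as Hmod. rewrite Hxy, valuation_bot in Hmod. lra.
Qed.

Lemma nonneg_below_bot : nonneg_below mu bot.
Proof. intros b Hb. rewrite (le_bot_eq b Hb), valuation_bot. lra. Qed.

Lemma valuation_opp : valuation L (fun x => - mu x).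
Proof.
  split; [rewrite valuation_bot; lra |].
  intros x y. pose proof (proj2 Hval x y). lra.
Qed.

Lemma valuation_meet_l (a : L) : valuation L (fun x => mu (meet a x)).
Proof.
  split; [rewrite (le_bot_eq _ (meet_le_r a bot)); apply valuation_bot |].
  intros x y. rewrite meet_join_distr_l, (proj2 Hval (meet a x) (meet a y)).
  replace (meet (meet a x) (meet a y)) with (meet a (meet x y)); [reflexivity |].
  apply le_antisym; solve_meet_le.
Qed.

End Valuation.

Section ContinuousValuation.
Context {L : frame} {mu : L -> R} (Hcont : continuous_valuation L mu).

Lemma valuation_sup_approx (I : L -> Prop) (eps : R) :
  directed L I -> 0 < eps -> exists x, I x /\ Rabs (mu x - mu (sup I)) < eps.
Proof.
  intros HI Heps. destruct (proj2 Hcont I HI eps Heps) as [x0 [Hx0 Hlim]].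
  exists x0. split; [exact Hx0 | apply Hlim; [exact Hx0 | apply le_refl]].
Qed.

Lemma le_valuation_sup (I : L -> Prop) (r : R) :
  directed L I -> (forall x, I x -> r <= mu x) -> r <= mu (sup I).
Proof.
  intros HI Hr. apply Rnot_lt_le. intros Hlt.
  destruct (valuation_sup_approx I (r - mu (sup I)) HI) as [x [Hx Happrox]]; [lra |].
  apply Rabs_def2 in Happrox. specialize (Hr x Hx). lra.
Qed.

Lemma valuation_sup_le (I : L -> Prop) (r : R) :
  directed L I -> (forall x, I x -> mu x <= r) -> mu (sup I) <= r.
Proof.
  intros HI Hr. apply Rnot_lt_le. intros Hlt.
  destruct (valuation_sup_approx I (mu (sup I) - r) HI) as [x [Hx Happrox]]; [lra |].
  apply Rabs_def2 in Happrox. specialize (Hr x Hx). lra.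
Qed.

Lemma valuation_chain_limit (e : nat -> L) :
  (forall k, le (e k) (e (S k))) ->
  forall eps, 0 < eps -> exists k0, forall k, (k0 <= k)%nat ->
    Rabs (mu (e k) - mu (sup (fun y => exists k, y = e k))) < eps.
Proof.
  intros He eps Heps.
  destruct (proj2 Hcont _ (directed_chain e He) eps Heps) as [x0 [[k0 ->] Hlim]].
  exists k0. intros k Hk. apply Hlim; [eauto | apply chain_le; assumption].
Qed.

Lemma nonneg_below_sup_directed (I : L -> Prop) :
  directed L I -> (forall x, I x -> nonneg_below mu x) -> nonneg_below mu (sup I).
Proof.
  intros HI Hnonneg b Hb. rewrite <- (meet_l b (sup I) Hb), meet_sup_distr.
  apply le_valuation_sup; [apply directed_meet_l, HI |].
  intros y [s [Hs ->]]. apply (Hnonneg s Hs), meet_le_r.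
Qed.

Lemma continuous_valuation_opp : continuous_valuation L (fun x => - mu x).
Proof.
  split; [exact (valuation_opp (proj1 Hcont)) |].
  intros I HI eps Heps. destruct (proj2 Hcont I HI eps Heps) as [x0 [Hx0 Hlim]].
  exists x0. split; [exact Hx0 |]. intros x Hx Hle.
  replace (- mu x - - mu (sup I)) with (- (mu x - mu (sup I))) by ring.
  rewrite Rabs_Ropp. auto.
Qed.

Lemma continuous_valuation_meet_l (a : L) : continuous_valuation L (fun x => mu (meet a x)).
Proof.
  split; [exact (valuation_meet_l (proj1 Hcont) a) |].
  intros I HI eps Heps. rewrite meet_sup_distr.
  destruct (proj2 Hcont _ (directed_meet_l a I HI) eps Heps) as [x0 [[s0 [Hs0 ->]] Hlim]].
  exists s0. split; [exact Hs0 |]. intros x Hx Hle.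
  apply Hlim; [eauto | apply meet_mono; auto using le_refl].
Qed.

End ContinuousValuation.

Lemma normal_valuation_opp {L : frame} {mu : L -> R} :
  normal_valuation L mu -> normal_valuation L (fun x => - mu x).
Proof.
  intros [Hcont Hnn]. split; [exact (continuous_valuation_opp Hcont) |].
  intros a. now rewrite Hnn.
Qed.

Lemma boolean_normal_valuation {L : frame} {mu : L -> R} :
  boolean_locale L -> continuous_valuation L mu -> normal_valuation L mu.
Proof.
  intros Hbool Hcont. split; [exact Hcont |].
  intros a. now rewrite (boolean_neg_neg Hbool).
Qed.

Section NormalValuation.
Context {L : frame} {mu : L -> R} (Hnorm : normal_valuation L mu).
Let Hcont : continuous_valuation L mu := proj1 Hnorm.
Let Hval : valuation L mu := proj1 Hcont.

(* [d /\ (a \/ ~a)] need not be [d], but both have the same double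
   pseudocomplement, so normality identifies their measures. *)
Lemma valuation_split (d a : L) : mu d = mu (meet d a) + mu (meet d (neg a)).
Proof.
  assert (Hdisj : meet (meet d a) (meet d (neg a)) = bot).
  { apply le_bot_eq. rewrite <- (meet_neg_r a). solve_meet_le. }
  rewrite <- (valuation_join_disjoint Hval _ _ Hdisj), <- meet_join_distr_l.
  rewrite <- (proj2 Hnorm (meet d (join a (neg a)))).
  now rewrite neg_neg_meet, neg_neg_join_neg, meet_top_r, (proj2 Hnorm).
Qed.

Lemma nonneg_below_join (a b : L) :
  nonneg_below mu a -> nonneg_below mu b -> nonneg_below mu (join a b).
Proof.
  intros Ha Hb c Hc. rewrite (valuation_split c a).
  assert (0 <= mu (meet c a)) by (apply Ha, meet_le_r).
  assert (0 <= mu (meet c (neg a))).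
  { apply Hb. apply le_trans with (meet (neg a) (join a b)); [solve_meet_le |].
    rewrite meet_join_distr_l, meet_neg_l. apply join_le; [apply bot_le | apply meet_le_r]. }
  lra.
Qed.

Lemma nonneg_below_nu_plus : nonneg_below mu (nu_plus mu).
Proof.
  apply (nonneg_below_sup_directed Hcont); [split | auto].
  - exists bot. exact (nonneg_below_bot Hval).
  - intros x y Hx Hy. exists (join x y).
    split; [now apply nonneg_below_join | split; [apply join_ge_l | apply join_ge_r]].
Qed.

Lemma nonneg_below_iff_le_nu_plus (a : L) : nonneg_below mu a <-> le a (nu_plus mu).
Proof.
  split; [apply le_sup |].
  intros Ha. exact (nonneg_below_le mu _ _ nonneg_below_nu_plus Ha).
Qed.

Lemma neg_neg_nu_plus : neg (neg (nu_plus mu)) = nu_plus mu.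
Proof.
  apply le_antisym; [| apply le_neg_neg]. apply nonneg_below_iff_le_nu_plus.
  intros b Hb. rewrite (valuation_split b (nu_plus mu)).
  rewrite (le_bot_eq (meet b (neg (nu_plus mu)))), (valuation_bot Hval).
  - rewrite Rplus_0_r. apply nonneg_below_nu_plus, meet_le_r.
  - rewrite <- (meet_neg_l (neg (nu_plus mu))). solve_meet_le.
Qed.

Section Exhaustion.
Variables (piece : L -> L) (c : L).
Hypothesis piece_le : forall x, le (piece x) x.
Hypothesis piece_nonpos : forall x, mu (piece x) <= 0.
Hypothesis piece_threshold : forall x m b,
  le b x -> mu b < - / INR (S m) -> mu (piece x) < - / INR (S m).

Fixpoint residue (k : nat) : L :=
  match k with O => c | S k => meet (residue k) (neg (piece (residue k))) end.

Fixpoint removed (k : nat) : L :=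
  match k with O => bot | S k => join (removed k) (piece (residue k)) end.

Let removed_all : L := sup (fun y => exists k, y = removed k).

Lemma residue_le_neg_removed (k : nat) : le (residue k) (neg (removed k)).
Proof.
  induction k as [| k IHk]; apply le_neg, le_bot_eq; cbn [residue removed].
  - apply meet_le_r.
  - rewrite meet_join_distr_l. apply join_le.
    + rewrite <- (meet_neg_l (removed k)). apply meet_mono; [| apply le_refl].
      eapply le_trans; [apply meet_le_l | exact IHk].
    + rewrite <- (meet_neg_l (piece (residue k))).
      apply meet_mono; [apply meet_le_r | apply le_refl].
Qed.

Lemma removed_le (k : nat) : le (removed k) c.
Proof.
  induction k as [| k IHk]; cbn [removed]; [apply bot_le |].
  apply join_le; [exact IHk |]. eapply le_trans; [apply piece_le |].
  clear IHk. induction k as [| k IHk]; cbn [residue]; [apply le_refl |].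
  eapply le_trans; [apply meet_le_l | exact IHk].
Qed.

Lemma valuation_removed_le (q : R) :
  (forall k, mu (piece (residue k)) <= - q) -> forall k, mu (removed k) <= - (INR k * q).
Proof.
  intros Hq k. induction k as [| k IHk]; cbn [removed].
  - rewrite (valuation_bot Hval). simpl. lra.
  - assert (Hdisj : meet (removed k) (piece (residue k)) = bot).
    { apply le_bot_eq. rewrite <- (meet_neg_r (removed k)). apply meet_mono; [apply le_refl |].
      eapply le_trans; [apply piece_le | apply residue_le_neg_removed]. }
    rewrite (valuation_join_disjoint Hval _ _ Hdisj), S_INR.
    specialize (Hq k). lra.
Qed.

Lemma le_residue (b : L) : le b (meet c (neg removed_all)) -> forall k, le b (residue k).
Proof.
  intros Hb k. induction k as [| k IHk]; cbn [residue].
  - eapply le_trans; [exact Hb | apply meet_le_l].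
  - apply le_meet; [exact IHk |]. apply le_neg, le_bot_eq.
    rewrite <- (meet_neg_l removed_all). apply meet_mono.
    + eapply le_trans; [exact Hb | apply meet_le_r].
    + apply le_trans with (removed (S k)); [apply join_ge_r | apply le_sup; now exists (S k)].
Qed.

(* If [mu b < -1/(m+1)] for some [b] below the remainder, [b] lies below every
   residue, so each greedy step removes at least [1/(m+1)]; then [mu (removed k)]
   tends to [-oo], contradicting continuity along the chain [removed k]. *)
Lemma exhaustion_nonneg_below : nonneg_below mu (meet c (neg removed_all)).
Proof.
  intros b Hb. apply Rnot_lt_le. intros Hneg.
  destruct (archimed_cor1 (- mu b)) as [[| m] [Hm Hm0]]; [lra | lia |].
  pose (q := / INR (S m)).
  assert (Hq : 0 < q) by (apply Rinv_0_lt_compat, lt_0_INR; lia).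
  assert (Hbq : mu b < - q) by (unfold q; lra).
  assert (Hsteps : forall k, mu (piece (residue k)) <= - q).
  { intros k. apply Rlt_le, (piece_threshold _ m b); [apply le_residue, Hb | exact Hbq]. }
  destruct (valuation_chain_limit Hcont removed (fun k => join_ge_l _ _) 1 Rlt_0_1)
    as [k0 Hlim].
  destruct (INR_archimed q (1 - mu removed_all) Hq) as [N HN].
  specialize (Hlim (N + k0)%nat ltac:(lia)). apply Rabs_def2 in Hlim.
  pose proof (valuation_removed_le q Hsteps (N + k0)) as Hbound.
  assert (INR N * q <= INR (N + k0) * q) by (apply Rmult_le_compat_r; [lra | apply le_INR; lia]).
  fold removed_all in Hlim. lra.
Qed.

Lemma exists_nonneg_below_ge : exists d, le d c /\ nonneg_below mu d /\ mu c <= mu d.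
Proof.
  exists (meet c (neg removed_all)).
  split; [apply meet_le_l | split; [exact exhaustion_nonneg_below |]].
  assert (Hnonpos : mu removed_all <= 0).
  { apply (valuation_sup_le Hcont); [apply (directed_chain removed), (fun k => join_ge_l _ _) |].
    intros x [k ->].
    assert (Hsteps : forall k, mu (piece (residue k)) <= - 0)
      by (intros; rewrite Ropp_0; apply piece_nonpos).
    pose proof (valuation_removed_le 0 Hsteps k). lra. }
  rewrite (valuation_split c removed_all), (meet_comm c removed_all), meet_l.
  - lra.
  - apply sup_le. intros s [k ->]. apply removed_le.
Qed.

End Exhaustion.

Lemma exists_nonneg_below_pos (c : L) :
  0 < mu c -> exists d, le d c /\ nonneg_below mu d /\ 0 < mu d.
Proof.
  intros Hc.
  destruct (functional_choice (fun x e => le e x /\ mu e <= 0 /\ forall m b,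
              le b x -> mu b < - / INR (S m) -> mu e < - / INR (S m)))
    as [piece Hpiece].
  { intros x.
    exact (exists_threshold_minimizer mu (fun e => le e x) bot (bot_le x) (valuation_bot Hval)). }
  destruct (exists_nonneg_below_ge piece c (fun x => proj1 (Hpiece x))
              (fun x => proj1 (proj2 (Hpiece x))) (fun x => proj2 (proj2 (Hpiece x))))
    as [d [Hdc [Hd Hge]]].
  exists d. split; [exact Hdc | split; [exact Hd | lra]].
Qed.

Lemma nonpos_below_neg_nu_plus (c : L) : le c (neg (nu_plus mu)) -> mu c <= 0.
Proof.
  intros Hc. apply Rnot_lt_le. intros Hpos.
  destruct (exists_nonneg_below_pos c Hpos) as [d [Hdc [Hd Hd_pos]]].
  assert (Hbot : le d (meet (nu_plus mu) (neg (nu_plus mu)))).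
  { apply le_meet; [now apply nonneg_below_iff_le_nu_plus | eapply le_trans; eauto]. }
  rewrite meet_neg_r in Hbot. rewrite (le_bot_eq d Hbot), (valuation_bot Hval) in Hd_pos. lra.
Qed.

Lemma positive_valuation_meet_l (a : L) :
  nonneg_below mu a -> positive_valuation L (fun x => mu (meet a x)).
Proof.
  intros Ha. split; [exact (valuation_meet_l Hval a) | split].
  - intros x. apply Ha, meet_le_l.
  - intros x y Hxy. rewrite (valuation_split (meet a y) x).
    replace (meet (meet a y) x) with (meet a x) by (apply le_antisym; solve_meet_le).
    assert (0 <= mu (meet (meet a y) (neg x))) by (apply Ha; solve_meet_le).
    lra.
Qed.

Lemma normal_valuation_meet_l (a : L) :
  neg (neg a) = a -> normal_valuation L (fun x => mu (meet a x)).
Proof.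
  intros Ha. split; [exact (continuous_valuation_meet_l Hcont a) |].
  intros x. rewrite <- Ha at 1. rewrite <- neg_neg_meet. apply (proj2 Hnorm).
Qed.

End NormalValuation.

Section HahnDecomposition.
Context {L : frame} {mu : L -> R} (Hnorm : normal_valuation L mu).
Let Hnorm_opp : normal_valuation L (fun x => - mu x) := normal_valuation_opp Hnorm.

Lemma neg_nu_plus_le_nu_minus : le (neg (nu_plus mu)) (nu_minus mu).
Proof.
  apply (nonneg_below_iff_le_nu_plus Hnorm_opp). intros b Hb.
  pose proof (nonpos_below_neg_nu_plus Hnorm b Hb). lra.
Qed.

Lemma nu_plus_join_nu_minus :
  extremally_disconnected L -> join (nu_plus mu) (nu_minus mu) = top.
Proof.
  intros Hed. apply top_le_eq.
  rewrite <- (Hed (nu_plus mu)), (neg_neg_nu_plus Hnorm).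
  apply join_le; [eapply le_trans; [apply neg_nu_plus_le_nu_minus |] | ];
    auto using join_ge_l, join_ge_r.
Qed.

Lemma valuation_null_below_nu_plus_meet_nu_minus (b : L) :
  le b (meet (nu_plus mu) (nu_minus mu)) -> mu b = 0.
Proof.
  intros Hb.
  assert (0 <= mu b).
  { apply (nonneg_below_iff_le_nu_plus Hnorm b); [| apply le_refl].
    eapply le_trans; [exact Hb | apply meet_le_l]. }
  assert (0 <= - mu b).
  { apply (nonneg_below_iff_le_nu_plus Hnorm_opp b); [| apply le_refl].
    eapply le_trans; [exact Hb | apply meet_le_r]. }
  lra.
Qed.

Lemma le_nu_plus_meet_nu_minus (a : L) :
  (forall b, le b a -> mu b = 0) -> le a (meet (nu_plus mu) (nu_minus mu)).
Proof.
  intros Hnull. apply le_meet.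
  - apply (nonneg_below_iff_le_nu_plus Hnorm). intros b Hb. rewrite (Hnull b Hb). lra.
  - apply (nonneg_below_iff_le_nu_plus Hnorm_opp). intros b Hb. rewrite (Hnull b Hb). lra.
Qed.

Lemma valuation_jordan_decomposition (x : L) :
  mu x = mu (meet (nu_plus mu) x) + mu (meet (nu_minus mu) x).
Proof.
  set (p := nu_plus mu). set (n := nu_minus mu).
  rewrite (valuation_split Hnorm x p), (valuation_split Hnorm (meet n x) p).
  rewrite (valuation_null_below_nu_plus_meet_nu_minus (meet (meet n x) p)) by solve_meet_le.
  replace (meet (meet n x) (neg p)) with (meet x (neg p)).
  - rewrite (meet_comm x p). lra.
  - pose proof neg_nu_plus_le_nu_minus. apply le_antisym; solve_meet_le.
Qed.

End HahnDecomposition.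

Theorem mainTheorem17 (L : frame) (nu : L -> R) :
  ((stonean L /\ normal_valuation L nu) \/
   (boolean_locale L /\ continuous_valuation L nu)) ->
  (forall a : L, nonneg_below nu a <-> le a (nu_plus nu)) /\
  (forall a : L, nonneg_below (fun x => - nu x) a <-> le a (nu_minus nu)) /\
  join (nu_plus nu) (nu_minus nu) = top /\
  ((forall b : L, le b (meet (nu_plus nu) (nu_minus nu)) -> nu b = 0) /\
   (forall a : L, (forall b : L, le b a -> nu b = 0) ->
      le a (meet (nu_plus nu) (nu_minus nu)))) /\
  (positive_valuation L (fun x => nu (meet (nu_plus nu) x)) /\
   normal_valuation L (fun x => nu (meet (nu_plus nu) x))) /\
  (positive_valuation L (fun x => - nu (meet (nu_minus nu) x)) /\
   normal_valuation L (fun x => - nu (meet (nu_minus nu) x))) /\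
  (forall x : L, nu x = nu (meet (nu_plus nu) x) - (- nu (meet (nu_minus nu) x))).
Proof.
  intros Hcases.
  assert (Hsetting : extremally_disconnected L /\ normal_valuation L nu).
  { destruct Hcases as [[[_ [_ Hed]] Hnorm] | [Hbool Hcont]]; [now split |].
    split; [exact (boolean_extremally_disconnected Hbool)
           | exact (boolean_normal_valuation Hbool Hcont)]. }
  destruct Hsetting as [Hed Hnorm].
  pose proof (normal_valuation_opp Hnorm) as Hnorm_opp.
  refine (conj _ (conj _ (conj _ (conj (conj _ _)
            (conj (conj _ _) (conj (conj _ _) _)))))).
  - exact (nonneg_below_iff_le_nu_plus Hnorm).
  - exact (nonneg_below_iff_le_nu_plus Hnorm_opp).
  - exact (nu_plus_join_nu_minus Hnorm Hed).
  - exact (valuation_null_below_nu_plus_meet_nu_minus Hnorm).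
  - exact (le_nu_plus_meet_nu_minus Hnorm).
  - exact (positive_valuation_meet_l Hnorm _ (nonneg_below_nu_plus Hnorm)).
  - exact (normal_valuation_meet_l Hnorm _ (neg_neg_nu_plus Hnorm)).
  - exact (positive_valuation_meet_l Hnorm_opp _ (nonneg_below_nu_plus Hnorm_opp)).
  - exact (normal_valuation_meet_l Hnorm_opp _ (neg_neg_nu_plus Hnorm_opp)).
  - intros x. rewrite (valuation_jordan_decomposition Hnorm x). ring.
Qed.
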